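(* Let $0 \le \alpha \le \beta < \infty$ and let $\varphi\colon\mathbb{R}\to\mathbb{R}$ satisfy $\alpha \le \frac{\varphi(a)-\varphi(b)}{a-b} \le \beta$ for all $a \ne b$; let $\phi$ denote componentwise application of $\varphi$. Let $L \ge 1$ and consider matrices $W_k$ ($k = 0,\dots,L$, with $W_L = I$), $H_k$, $G_k$ ($k = 0,\dots,L-1$) of compatible dimensions, and the network defined from input $x_0$ by $$y_k = W_k x_k \ (k = 0,\dots,L), \qquad x_{k+1} = H_k x_k + G_k \phi(y_k) \ (k = 0,\dots,L-1).$$ Let $\hat{H}_k := H_k + \frac{\alpha+\beta}{2} G_k W_k$, with the convention that $\hat H_k\cdots\hat H_{j+1} = I$ when $j=k$. Fix $p\in[1,\infty]$, use the $\ell_p$ norm on all vector spaces and the induced operator norm $\|\cdot\|$ on matrices. Define $m_0 := \|W_0\|$ and recursively, for $k = 0,\dots,L-1$, $$m_{k+1} := \|W_{k+1}\hat{H}_k \cdots \hat{H}_0\| + \frac{\beta - \alpha}{2}\sum_{j=0}^{k} \|W_{k+1}\hat{H}_k \cdots \hat{H}_{j+1} G_j\|\, m_j.$$ Then for each $k = 0,\dots,L$, $m_k$ is a Lipschitz constant of the map $x_0 \mapsto y_k$, i.e. $\|y_k(x_0) - y_k(x_0')\|_p \le m_k \|x_0 - x_0'\|_p$ for all inputs $x_0, x_0'$. In particular, $m_L$ is a Lipschitz constant of the network map $x_0 \mapsto y_L = x_L$. *)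

From HB Require Import structures.
From mathcomp Require Import all_boot all_order all_algebra.
From mathcomp Require Import all_classical all_reals all_analysis.
Set Implicit Arguments. Unset Strict Implicit. Unset Printing Implicit Defensive.
Import Order.TTheory GRing.Theory Num.Theory.
Local Open Scope ring_scope.

Section Defs.
Variable R : realType.

Definition lpnorm (p : \bar R) (a : nat) (v : 'cV[R]_a) : R :=
  match p with
  | EFin q => (\sum_(i < a) `|v i ord0| `^ q) `^ q^-1
  | _ => \big[Num.max/0]_(i < a) `|v i ord0|
  end.

Definition opnorm (p : \bar R) (a b : nat) (A : 'M[R]_(a, b)) : R :=
  sup [set lpnorm p (A *m x) | x in [set x : 'cV[R]_b | lpnorm p x <= 1]].

Variables (n d : nat -> nat).
Variables (W : forall k, 'M[R]_(d k, n k))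
          (H : forall k, 'M[R]_(n k.+1, n k))
          (G : forall k, 'M[R]_(n k.+1, d k)).
Variable phi : R -> R.

Fixpoint xs (x0 : 'cV[R]_(n 0)) (k : nat) : 'cV[R]_(n k) :=
  match k with
  | 0 => x0
  | k'.+1 => H k' *m xs x0 k' + G k' *m map_mx phi (W k' *m xs x0 k')
  end.

Definition ys (x0 : 'cV[R]_(n 0)) (k : nat) : 'cV[R]_(d k) := W k *m xs x0 k.

Definition Hhat (alpha beta : R) (k : nat) : 'M[R]_(n k.+1, n k) :=
  H k + ((alpha + beta) / 2) *: (G k *m W k).

(* prodH j i = \hat H_{i+j-1} ... \hat H_j  (identity when i = 0) *)
Fixpoint prodH (alpha beta : R) (j i : nat) : 'M[R]_(n (i + j), n j) :=
  match i with
  | 0 => 1%:M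
  | i'.+1 => Hhat alpha beta (i' + j) *m prodH alpha beta j i'
  end.

Lemma sub_addS_eq (k : nat) (j : 'I_k.+1) : (k - j + j.+1 = k.+1)%N.
Proof. by rewrite addnS subnK // -ltnS. Qed.

Definition WH0 (alpha beta : R) (k : nat) : 'M[R]_(d k.+1, n 0) :=
  W k.+1 *m castmx (congr1 n (addn0 k.+1), erefl) (prodH alpha beta 0 k.+1).

Definition WHG (alpha beta : R) (k : nat) (j : 'I_k.+1) : 'M[R]_(d k.+1, d j) :=
  W k.+1 *m castmx (congr1 n (sub_addS_eq j), erefl)
    (prodH alpha beta j.+1 (k - j)) *m G j.

End Defs.

(* Write phi y - phi y' = c (y - y') + e with c = (alpha + beta) / 2; the slope
   bounds give |e| <= (beta - alpha) / 2 |y - y'| entrywise.  The difference of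
   two trajectories then obeys the linear recursion
   dx_{k+1} = \hat H_k dx_k + G_k e_k, whose variation-of-constants formula
   expresses dy_{k+1} = W_{k+1} dx_{k+1} through dx_0 and the residuals e_j,
   j <= k.  Taking l_p norms (monotone in the absolute values of the entries)
   and inducting on k yields the recursive constants m_k. *)

From HB Require Import structures.
From mathcomp Require Import all_boot all_order all_algebra.
From mathcomp Require Import all_classical all_reals all_analysis.
From mathcomp Require Import lra.
Import Order.TTheory GRing.Theory Num.Theory.
Set Implicit Arguments. Unset Strict Implicit. Unset Printing Implicit Defensive.
Local Open Scope ring_scope.

Section LpNorm.
Variable R : realType.

Definition col_seq a (v : 'cV[R]_a) (k : nat) : R :=
  oapp (fun i : 'I_a => v i ord0) 0 (insub k).

Lemma col_seq_ord a (v : 'cV[R]_a) (i : 'I_a) : col_seq v i = v i ord0.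
Proof. by rewrite /col_seq valK. Qed.

Lemma col_seq_ge a (v : 'cV[R]_a) k : (a <= k)%N -> col_seq v k = 0.
Proof. by move=> ak; rewrite /col_seq insubF // ltnNge ak. Qed.

Lemma col_seqD a (u v : 'cV[R]_a) : col_seq (u + v) = (col_seq u \+ col_seq v)%R.
Proof.
apply: funext => k /=; rewrite /col_seq.
by case: insub => [i|] /=; rewrite ?mxE ?addr0.
Qed.

(* The l_q norm is the L^q norm of the zero-extended sequence w.r.t. the
   counting measure; this is how Minkowski's inequality becomes available. *)
Lemma Lnorm_counting_col_seq (q : R) a (v : 'cV[R]_a) : 0 < q ->
  Lnorm counting q%:E (EFin \o col_seq v) = (lpnorm q%:E v)%:E.
Proof.
move=> q0; rewrite Lnorm_counting //.
rewrite (@nneseries_split _ (fun k => `|(EFin \o col_seq v) k| `^ q)%E 0 a);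
  last by move=> k _; apply: poweR_ge0.
rewrite add0n eseries0 ?adde0; last first.
  move=> k ak _.
  by rewrite /comp col_seq_ge // abse_EFin normr0 poweR_EFin powR0 // gt_eqF.
rewrite big_mkord.
under eq_bigr do rewrite /comp abse_EFin poweR_EFin col_seq_ord.
by rewrite sumEFin poweR_EFin.
Qed.

Variable p : \bar R.
Hypothesis p_ge1 : (1 <= p)%E.

Lemma lpnorm_ge0 a (v : 'cV[R]_a) : 0 <= lpnorm p v.
Proof.
case: p p_ge1 => [q|_|//] /=; first by rewrite powR_ge0.
by elim/big_ind: _ => // x y x0 y0; rewrite le_max x0.
Qed.

Lemma ler_coord_lpnorm a (v : 'cV[R]_a) i : `|v i ord0| <= lpnorm p v.
Proof.
case: p p_ge1 => [q|_|//] /=; last exact: (le_bigmax 0 (fun i => `|v i ord0|) i).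
rewrite lee_fin => q1; have q0 : 0 < q by rewrite (lt_le_trans _ q1).
have -> : `|v i ord0| = (`|v i ord0| `^ q) `^ q^-1.
  by rewrite -powRrM mulfV ?gt_eqF // powRr1.
apply: ge0_ler_powR.
- by rewrite invr_ge0 ltW.
- by rewrite nnegrE powR_ge0.
- by rewrite nnegrE sumr_ge0 // => j _; rewrite powR_ge0.
by rewrite (bigD1 i) //= lerDl sumr_ge0 // => j _; rewrite powR_ge0.
Qed.

Lemma lpnorm_le a (u v : 'cV[R]_a) :
  (forall i, `|u i ord0| <= `|v i ord0|) -> lpnorm p u <= lpnorm p v.
Proof.
move=> uv; case: p p_ge1 => [q|_|//] /=; last exact: le_bigmax2.
rewrite lee_fin => q1; have q0 : 0 < q by rewrite (lt_le_trans _ q1).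
apply: ge0_ler_powR.
- by rewrite invr_ge0 ltW.
- by rewrite nnegrE sumr_ge0 // => j _; rewrite powR_ge0.
- by rewrite nnegrE sumr_ge0 // => j _; rewrite powR_ge0.
by apply: ler_sum => i _; apply: ge0_ler_powR => //; exact: ltW.
Qed.

Lemma lpnormZ a c (v : 'cV[R]_a) : lpnorm p (c *: v) = `|c| * lpnorm p v.
Proof.
case: p p_ge1 => [q|_|//] /=; last first.
  elim/big_rec2: _ => [|i y1 y2 _ ->]; first by rewrite mulr0.
  by rewrite mxE normrM maxr_pMr.
rewrite lee_fin => q1; have q0 : 0 < q by rewrite (lt_le_trans _ q1).
under eq_bigr do rewrite mxE normrM powRM //.
rewrite -mulr_sumr powRM ?powR_ge0 //; last by rewrite sumr_ge0 // => j _; rewrite powR_ge0.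
by rewrite -powRrM mulfV ?gt_eqF // powRr1.
Qed.

Lemma lpnorm0 a : lpnorm p (0 : 'cV[R]_a) = 0.
Proof. by rewrite -(scale0r (0 : 'cV[R]_a)) lpnormZ normr0 mul0r. Qed.

Lemma lpnorm_eq0 a (v : 'cV[R]_a) : lpnorm p v = 0 -> v = 0.
Proof.
move=> v0; apply/matrixP => i j; rewrite (ord1 j) mxE.
by apply/normr0_eq0/le_anti; rewrite normr_ge0 andbT -v0 ler_coord_lpnorm.
Qed.

Lemma ler_lpnormD a (u v : 'cV[R]_a) : lpnorm p (u + v) <= lpnorm p u + lpnorm p v.
Proof.
have u0 := lpnorm_ge0 u; have v0 := lpnorm_ge0 v.
have ui := ler_coord_lpnorm u; have vi := ler_coord_lpnorm v.
case: p p_ge1 u0 v0 ui vi => [q||//] /= + u0 v0 ui vi.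
  rewrite lee_fin => q1; have q0 : 0 < q by rewrite (lt_le_trans _ q1).
  have := @minkowski_EFin _ _ R counting (col_seq u) (col_seq v) q
    (fun _ _ _ => I) (fun _ _ _ => I) q1.
  by rewrite -col_seqD !Lnorm_counting_col_seq // -EFinD lee_fin.
move=> _; apply: bigmax_le => [|i _]; first by rewrite addr_ge0.
by rewrite mxE (le_trans (ler_normD _ _)) // lerD.
Qed.

Lemma ler_lpnorm_sum a k (f : 'I_k -> 'cV[R]_a) :
  lpnorm p (\sum_(j < k) f j) <= \sum_(j < k) lpnorm p (f j).
Proof.
elim/big_rec2: _ => [|j y1 y2 _ IH]; first by rewrite lpnorm0.
by rewrite (le_trans (ler_lpnormD _ _)) // lerD2l.
Qed.

Lemma lpnorm_castmx1 a b (e : a = b) (v : 'cV[R]_a) :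
  lpnorm p (castmx (e, erefl) (1%:M : 'M[R]_a) *m v) = lpnorm p v.
Proof. by case: b / e; rewrite castmx_id mul1mx. Qed.

Lemma opnorm_has_sup a b (A : 'M[R]_(a, b)) :
  has_sup [set lpnorm p (A *m x) | x in [set x : 'cV[R]_b | lpnorm p x <= 1]].
Proof.
split; first by exists (lpnorm p (A *m 0)), 0 => //=; rewrite lpnorm0 ?ler01.
pose S := \sum_i \sum_j `|A i j|.
have S0 : 0 <= S by rewrite !sumr_ge0 // => i _; rewrite sumr_ge0.
exists (lpnorm p (const_mx S : 'cV[R]_a)) => _ [x x1 <-].
apply: lpnorm_le => i; rewrite !mxE (ger0_norm S0) (le_trans (ler_norm_sum _ _ _)) //.
apply: (@le_trans _ _ (\sum_j `|A i j|)).
  apply: ler_sum => j _; rewrite normrM ler_piMr //.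
  exact: le_trans (ler_coord_lpnorm x j) x1.
by rewrite /S (bigD1 i) //= lerDl sumr_ge0 // => i' _; rewrite sumr_ge0.
Qed.

Lemma opnorm_ge0 a b (A : 'M[R]_(a, b)) : 0 <= opnorm p A.
Proof.
apply: le_trans (sup_upper_bound (opnorm_has_sup A) _); last first.
  by exists 0 => //=; rewrite lpnorm0 ?ler01.
by rewrite mulmx0 lpnorm0.
Qed.

Lemma ler_lpnorm_mulmx a b (A : 'M[R]_(a, b)) x :
  lpnorm p (A *m x) <= opnorm p A * lpnorm p x.
Proof.
have [x0|xN0] := eqVneq (lpnorm p x) 0.
  by rewrite (lpnorm_eq0 x0) mulmx0 !lpnorm0 mulr0.
set s := lpnorm p x; have s0 : 0 < s by rewrite lt_def xN0 lpnorm_ge0.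
have normV : `|s^-1| = s^-1 by rewrite ger0_norm // invr_ge0 ltW.
have : lpnorm p (A *m (s^-1 *: x)) <= opnorm p A.
  apply: (sup_upper_bound (opnorm_has_sup A)); exists (s^-1 *: x) => //=.
  by rewrite lpnormZ normV mulVf ?gt_eqF.
by rewrite -scalemxAr lpnormZ normV mulrC ler_pdivrMr.
Qed.

End LpNorm.

Lemma centered_slope_bound (R : realFieldType) (alpha beta s z : R) :
  alpha <= s <= beta ->
  `|(s - (alpha + beta) / 2) * z| <= (beta - alpha) / 2 * `|z|.
Proof.
case/andP=> as_ sb; rewrite normrM ler_wpM2r //.
by rewrite ler_norml; apply/andP; split; lra.
Qed.

Section Network.
Variable R : realType.
Variables (alpha beta : R) (phi : R -> R) (n d : nat -> nat).
Variables (W : forall k, 'M[R]_(d k, n k))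
          (H : forall k, 'M[R]_(n k.+1, n k))
          (G : forall k, 'M[R]_(n k.+1, d k)).

Local Notation Hh := (Hhat W H G alpha beta).
Local Notation xs := (xs W H G phi).
Local Notation ys := (ys W H G phi).

(* [hprod j K] is \hat H_{K-1} ... \hat H_j, indexed by its endpoints so that
   no casts are needed; for K < j it is a junk value. *)
Fixpoint hprod (j K : nat) : 'M[R]_(n K, n j) :=
  match K with
  | 0 => conform_mx 0 (1%:M : 'M[R]_(n j))
  | K'.+1 => if (j <= K')%N then Hh K' *m hprod j K'
             else conform_mx 0 (1%:M : 'M[R]_(n j))
  end.

Lemma hprod_id j : hprod j j = 1%:M.
Proof. by case: j => [|j] /=; rewrite ?ltnn conform_mx_id. Qed.

Lemma hprodS j K : (j <= K)%N -> hprod j K.+1 = Hh K *m hprod j K.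
Proof. by move=> jK /=; rewrite jK. Qed.

Lemma castmx_prodH j i K (e : n (i + j) = n K) :
  (i + j = K)%N -> castmx (e, erefl) (prodH W H G alpha beta j i) = hprod j K.
Proof.
move=> ijK; case: K / ijK e => e; rewrite castmx_id; clear e.
elim: i => [|i IH]; first by rewrite hprod_id.
change (Hh (i + j) *m prodH W H G alpha beta j i = hprod j (i + j).+1).
by rewrite hprodS ?leq_addl // IH.
Qed.

Lemma WH0E k : WH0 W H G alpha beta k = W k.+1 *m hprod 0 k.+1.
Proof. by rewrite /WH0 (@castmx_prodH 0 k.+1 k.+1 _ (addn0 _)). Qed.

Lemma WHGE k (j : 'I_k.+1) :
  WHG W H G alpha beta j = W k.+1 *m hprod j.+1 k.+1 *m G j.
Proof. by rewrite /WHG (@castmx_prodH j.+1 (k - j) k.+1 _ (sub_addS_eq j)). Qed.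

Variables (x0 x0' : 'cV[R]_(n 0)).

Definition dxs k := xs x0 k - xs x0' k.

Definition resid k :=
  map_mx phi (ys x0 k) - map_mx phi (ys x0' k)
  - ((alpha + beta) / 2) *: (ys x0 k - ys x0' k).

Lemma dxsS k : dxs k.+1 = Hh k *m dxs k + G k *m resid k.
Proof.
set c := (alpha + beta) / 2.
have cGW : (c *: (G k *m W k)) *m dxs k = G k *m (c *: (ys x0 k - ys x0' k)).
  by rewrite /ys /dxs -mulmxBr -scalemxAl -scalemxAr mulmxA.
rewrite /Hhat /resid /dxs mulmxDl -/c cGW [G k *m (_ - c *: _)]mulmxBr.
by rewrite -[RHS]addrA subrKC !mulmxBr opprD addrACA.
Qed.

Lemma dxs_unroll k r (M : 'M[R]_(r, n k)) :
  M *m dxs k = M *m hprod 0 k *m dxs 0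
    + \sum_(j < k) M *m hprod j.+1 k *m (G j *m resid j).
Proof.
elim: k r M => [|k IH] r M; first by rewrite big_ord0 addr0 hprod_id mulmx1.
rewrite dxsS mulmxDr mulmxA IH big_ord_recr /= ltnn conform_mx_id mulmx1 addrA.
congr (_ + _ + _); first by rewrite !mulmxA.
by apply: eq_bigr => j _; rewrite ltn_ord !mulmxA.
Qed.

Hypothesis phi_slope : forall a b : R, a != b ->
  alpha <= (phi a - phi b) / (a - b) <= beta.

Lemma resid_le k i :
  `|resid k i ord0| <= `|((beta - alpha) / 2 *: (ys x0 k - ys x0' k)) i ord0|.
Proof.
rewrite /resid; move: (ys x0 k) (ys x0' k) => y y'; rewrite !mxE.
have [->|ab] := eqVneq (y i ord0) (y' i ord0); first by rewrite !(subrr, mulr0).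
have := phi_slope ab; set s := (_ / _) => s_bounds.
have -> : phi (y i ord0) - phi (y' i ord0) = s * (y i ord0 - y' i ord0).
  by rewrite /s divfK // subr_eq0.
rewrite -mulrBl [X in _ <= X]normrM (@ger0_norm _ ((beta - alpha) / 2)); last first.
  by case/andP: s_bounds => as_ sb; lra.
exact: centered_slope_bound.
Qed.

Hypothesis alpha_le_beta : alpha <= beta.
Variables (p : \bar R) (m : nat -> R).
Hypothesis p_ge1 : (1 <= p)%E.

Lemma ys_lipschitzS k :
  (forall j, (j <= k)%N -> lpnorm p (ys x0 j - ys x0' j) <= m j * lpnorm p (dxs 0)) ->
  lpnorm p (ys x0 k.+1 - ys x0' k.+1)
    <= (opnorm p (WH0 W H G alpha beta k)
        + (beta - alpha) / 2 *
          \sum_(j < k.+1) opnorm p (WHG W H G alpha beta j) * m j)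
       * lpnorm p (dxs 0).
Proof.
move=> lip_le_k; have c0 : 0 <= (beta - alpha) / 2 by rewrite divr_ge0 ?subr_ge0.
set c := (beta - alpha) / 2.
rewrite /ys -mulmxBr -/(dxs _) dxs_unroll mulrDl.
apply: le_trans (ler_lpnormD p_ge1 _ _) _; apply: lerD.
  by rewrite -WH0E; apply: ler_lpnorm_mulmx.
apply: le_trans (ler_lpnorm_sum p_ge1 _) _.
rewrite -mulrA mulr_suml mulr_sumr; apply: ler_sum => j _.
rewrite mulmxA -WHGE; apply: le_trans (ler_lpnorm_mulmx p_ge1 _ _) _.
rewrite [c * _]mulrC -!mulrA; apply: ler_wpM2l; first exact: opnorm_ge0.
apply: le_trans (lpnorm_le p_ge1 (resid_le (k := j))) _.
rewrite lpnormZ // ger0_norm // mulrA [X in _ <= X]mulrC ler_wpM2l //.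
by apply: lip_le_k; rewrite -ltnS.
Qed.

End Network.

Theorem theorem2 (R : realType) (alpha beta : R) (phi : R -> R)
  (L : nat) (n d : nat -> nat)
  (W : forall k, 'M[R]_(d k, n k))
  (H : forall k, 'M[R]_(n k.+1, n k))
  (G : forall k, 'M[R]_(n k.+1, d k))
  (p : \bar R) (m : nat -> R) :
  0 <= alpha -> alpha <= beta ->
  (forall a b : R, a != b ->
     alpha <= (phi a - phi b) / (a - b) <= beta) ->
  (1 <= L)%N ->
  forall hdL : d L = n L,
  W L = castmx (esym hdL, erefl) (1%:M : 'M[R]_(n L)) ->
  (1 <= p)%E ->
  m 0%N = opnorm p (W 0%N) ->
  (forall k : nat, (k < L)%N ->
     m k.+1 = opnorm p (WH0 W H G alpha beta k)
              + (beta - alpha) / 2 *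
                \sum_(j < k.+1) opnorm p (WHG W H G alpha beta j) * m j) ->
  (forall k : nat, (k <= L)%N ->
     forall x0 x0' : 'cV[R]_(n 0%N),
       lpnorm p (ys W H G phi x0 k - ys W H G phi x0' k)
         <= m k * lpnorm p (x0 - x0'))
  /\
  (forall x0 x0' : 'cV[R]_(n 0%N),
     lpnorm p (xs W H G phi x0 L - xs W H G phi x0' L)
       <= m L * lpnorm p (x0 - x0')).
Proof.
move=> _ alpha_le_beta phi_slope _ hdL WL_id p_ge1 m0 mS.
have lip_ys : forall k, (k <= L)%N -> forall x0 x0',
    forall j, (j <= k)%N -> lpnorm p (ys W H G phi x0 j - ys W H G phi x0' j)
                            <= m j * lpnorm p (x0 - x0').
  elim=> [_ x0 x0' j|k IH kL x0 x0' j].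
    by rewrite leqn0 => /eqP->; rewrite /ys -mulmxBr m0 ler_lpnorm_mulmx.
  rewrite leq_eqVlt ltnS => /predU1P[->|]; last exact: IH (ltnW kL) x0 x0' j.
  by rewrite mS //; apply: ys_lipschitzS => //; apply: IH (ltnW kL) x0 x0'.
split=> [k kL x0 x0'|x0 x0']; first exact: lip_ys kL x0 x0' k (leqnn k).
have := lip_ys L (leqnn L) x0 x0' L (leqnn L).
by rewrite /ys -mulmxBr WL_id lpnorm_castmx1.
Qed.
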